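(* $\bigcap_{k=0}^{+\infty}\mathbb P_k=\emptyset$, where $\mathbb P_k=\{p^{(k)}_n:n\in\mathbb N\}$.
   Context: Let $p_n$ denote the $n$-th prime number. Define $p^{(0)}_n=n$ and recursively $p^{(k+1)}_n=p_{p^{(k)}_n}$ for $k\in\mathbb N_0$ (so $\mathbb P_0=\mathbb N$, $\mathbb P_1$ is the set of primes). *)

From mathcomp Require Import all_boot.

(* Convention: N = {1, 2, 3, ...}; p_1 = 2, p_2 = 3, ... *)

(* smallest prime strictly larger than p; searched in (p, p! + 1], which always
   contains a prime (any prime factor of p! + 1 exceeds p). *)
Definition next_prime (p : nat) : nat :=
  p.+1 + find prime (iota p.+1 (p`!)).

(* nth_prime n = p_n for n >= 1 (nth_prime 0 = 0 is a junk value, never used) *)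
Fixpoint nth_prime (n : nat) : nat :=
  match n with
  | 0 => 0
  | 1 => 2
  | m.+1 => next_prime (nth_prime m)
  end.

Definition iter_prime (k n : nat) : nat := iter k nth_prime n.

Definition Pk (k : nat) : nat -> Prop :=
  fun m => exists n, 0 < n /\ m = iter_prime k n.

Lemma nth_prime_test : [:: nth_prime 1; nth_prime 2; nth_prime 3; nth_prime 4; nth_prime 5] = [:: 2; 3; 5; 7; 11].
Proof. by vm_compute. Qed.

From mathcomp Require Import all_boot.

(* Since n < p_n for n >= 1, iterating k times gives p^(k)_n >= n + k, so no
   m lies in P_(m+1). *)

Lemma next_prime_gt p : p < next_prime p.
Proof. by rewrite /next_prime ltnS leq_addr. Qed.

Lemma nth_prime_gt n : 0 < n -> n < nth_prime n.
Proof.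
elim: n => [//|[//|n] IH _].
rewrite -[nth_prime n.+2]/(next_prime (nth_prime n.+1)).
exact: leq_ltn_trans (IH isT) (next_prime_gt _).
Qed.

Lemma iter_inflationary_ge (f : nat -> nat) k n :
  (forall m, 0 < m -> m < f m) -> 0 < n -> n + k <= iter k f n.
Proof.
move=> f_gt n_gt0; elim: k => [|k IH]; first by rewrite addn0.
have iter_gt0 : 0 < iter k f n by rewrite (leq_trans n_gt0) // (leq_trans (leq_addr k n)).
by rewrite iterS addnS (leq_ltn_trans IH (f_gt _ iter_gt0)).
Qed.

Theorem corollary2 : forall m : nat, ~ (forall k : nat, Pk k m).
Proof.
move=> m in_all_Pk; have [n [n_gt0 m_eq]] := in_all_Pk m.+1.
have := @iter_inflationary_ge _ m.+1 _ nth_prime_gt n_gt0.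
by rewrite -/(iter_prime m.+1 n) -m_eq addnS ltnNge leq_addl.
Qed.
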